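(* Let $G$ be an infinite totally bounded topological group with identity $e$, and let $\vec m=(m_1,\dots,m_k)\in\mathbb{Z}^k$ satisfy $m_1+\dots+m_k=0$. Then every neighbourhood $U$ of $e$ in $G$ is a Ramsey $\vec m$-product subset of $G$.
   Context: A subset $A$ of a group $G$ is a Ramsey $\vec m$-product subset, for $\vec m=(m_1,\dots,m_k)\in\mathbb{Z}^k$, if every infinite subset $X\subseteq G$ contains pairwise distinct $x_1,\dots,x_k\in X$ such that $x_{\sigma(1)}^{m_1}x_{\sigma(2)}^{m_2}\cdots x_{\sigma(k)}^{m_k}\in A$ for every permutation $\sigma\in S_k$. *)

From Stdlib Require Import ZArith List Permutation.
Import ListNotations.


Record TopGroup := {
  carrier :> Type;
  gmul : carrier -> carrier -> carrier;
  ginv : carrier -> carrier;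
  gone : carrier;
  gmulA : forall x y z, gmul x (gmul y z) = gmul (gmul x y) z;
  gmul1l : forall x, gmul gone x = x;
  gmul1r : forall x, gmul x gone = x;
  gmulVl : forall x, gmul (ginv x) x = gone;
  gmulVr : forall x, gmul x (ginv x) = gone;
  is_open : (carrier -> Prop) -> Prop;
  open_full : is_open (fun _ => True);
  open_union : forall F : (carrier -> Prop) -> Prop,
      (forall V, F V -> is_open V) ->
      is_open (fun x => exists V, F V /\ V x);
  open_inter : forall V W, is_open V -> is_open W ->
      is_open (fun x => V x /\ W x);
  mul_cont : forall a b (W : carrier -> Prop), is_open W -> W (gmul a b) ->
      exists V1 V2, is_open V1 /\ is_open V2 /\ V1 a /\ V2 b /\
        (forall x y, V1 x -> V2 y -> W (gmul x y));
  inv_cont : forall a (W : carrier -> Prop), is_open W -> W (ginv a) ->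
      exists V, is_open V /\ V a /\ (forall x, V x -> W (ginv x))
}.

Section Defs.
Variable G : TopGroup.

Definition neighbourhood (a : G) (U : G -> Prop) : Prop :=
  exists V, is_open G V /\ V a /\ (forall x, V x -> U x).

Definition finite_set (X : G -> Prop) : Prop :=
  exists l : list G, forall x, X x -> In x l.

Definition infinite_set (X : G -> Prop) : Prop := ~ finite_set X.

Definition totally_bounded : Prop :=
  forall U, neighbourhood (gone G) U ->
    exists F : list G, forall x, exists g u, In g F /\ U u /\ x = gmul G g u.

Fixpoint npow (x : G) (n : nat) : G :=
  match n with O => gone G | S n => gmul G x (npow x n) end.

Definition zpow (x : G) (z : Z) : G :=
  match z with
  | Z0 => gone G
  | Zpos p => npow x (Pos.to_nat p)
  | Zneg p => ginv G (npow x (Pos.to_nat p))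
  end.

Fixpoint prodpow (ms : list Z) (ys : list G) : G :=
  match ms, ys with
  | m :: ms', y :: ys' => gmul G (zpow y m) (prodpow ms' ys')
  | _, _ => gone G
  end.

(* Since xs has no
   duplicates, the lists ys that are permutations of xs are exactly the
   reorderings [x_{sigma(1)}; ...; x_{sigma(k)}] for sigma in S_k. *)
Definition ramsey_product (m : list Z) (A : G -> Prop) : Prop :=
  forall X : G -> Prop, infinite_set X ->
    exists xs : list G,
      length xs = length m /\ NoDup xs /\ (forall x, In x xs -> X x) /\
      (forall ys, Permutation xs ys -> A (prodpow m ys)).

End Defs.

(* In a totally bounded group every neighbourhood U of e contains a
   neighbourhood W with x^-1 W x inside U for all x: cover G by finitely
   many translates g V and intersect the finitely many conjugates g V g^-1.
   Such conjugation-small neighbourhoods let one commute small errors past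
   powers, so if y_1, ..., y_k all lie in one translate gW then
   y_1^m_1 ... y_k^m_k is within a prescribed neighbourhood of
   g^(m_1 + ... + m_k) = e, whatever the order of the y_i.  Finitely many
   translates gW cover G, so one of them meets the infinite set X in an
   infinite set, from which k distinct points are picked. *)

From Stdlib Require Import ZArith List Permutation Lia Classical.
Import ListNotations.

Section TopGroupFacts.
Variable G : TopGroup.
Local Notation "x ** y" := (gmul G x y) (at level 40, left associativity).
Local Notation e := (gone G).
Local Notation gi := (ginv G).
Local Notation nbhd := (neighbourhood G).

Lemma ginv_one : gi e = e.
Proof. rewrite <- (gmul1r G (gi e)). apply gmulVl. Qed.

Lemma gmulKl a b : gi a ** (a ** b) = b.
Proof. rewrite gmulA, gmulVl, gmul1l. reflexivity. Qed.

Lemma gmulKVl a b : a ** (gi a ** b) = b.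
Proof. rewrite gmulA, gmulVr, gmul1l. reflexivity. Qed.

Lemma ginv_mul a b : gi (a ** b) = gi b ** gi a.
Proof.
  rewrite <- (gmulKl (a ** b) (gi b ** gi a)).
  replace (a ** b ** (gi b ** gi a)) with e.
  - symmetry. apply gmul1r.
  - rewrite <- !gmulA, gmulKVl. symmetry. apply gmulVr.
Qed.

Lemma ginvK a : gi (gi a) = a.
Proof.
  rewrite <- (gmul1r G (gi (gi a))), <- (gmulVl G a).
  rewrite gmulA, gmulVl, gmul1l. reflexivity.
Qed.

Lemma nbhd_mem a U : nbhd a U -> U a.
Proof. intros [V [_ [Va HVU]]]. auto. Qed.

Lemma nbhd_and a P Q : nbhd a P -> nbhd a Q -> nbhd a (fun x => P x /\ Q x).
Proof.
  intros [V [HV [Va HVP]]] [W [HW [Wa HWQ]]].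
  exists (fun x => V x /\ W x).
  split; [apply open_inter; auto | split; auto].
  intros x [Vx Wx]; auto.
Qed.

Lemma nbhd_forall_list (F : list G) (P : G -> G -> Prop) a :
  (forall g, In g F -> nbhd a (P g)) ->
  nbhd a (fun w => forall g, In g F -> P g w).
Proof.
  induction F as [|g0 F IH]; intros HP.
  - exists (fun _ => True). split; [apply open_full | split; auto].
    intros x _ g [].
  - assert (HF : nbhd a (fun w => forall g, In g F -> P g w))
      by (apply IH; intros g Hg; apply HP; right; exact Hg).
    destruct (nbhd_and _ _ _ (HP g0 (or_introl eq_refl)) HF)
      as [V [HV [Va HVP]]].
    exists V. split; [exact HV | split; [exact Va |]].
    intros x Vx g Hg. destruct (HVP x Vx) as [Hx0 Hx].
    destruct Hg as [<- | Hg]; auto.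
Qed.

Lemma nbhd_mul_split U : nbhd e U ->
  exists A B, nbhd e A /\ nbhd e B /\ forall x y, A x -> B y -> U (x ** y).
Proof.
  intros [O [HO [Oe HOU]]].
  assert (Oee : O (e ** e)) by (rewrite gmul1l; exact Oe).
  destruct (mul_cont G e e O HO Oee) as [V1 [V2 [H1 [H2 [V1e [V2e HV]]]]]].
  exists V1, V2.
  split; [exists V1; auto | split; [exists V2; auto | auto]].
Qed.

Lemma nbhd_inv U : nbhd e U -> nbhd e (fun v => U (gi v)).
Proof.
  intros [O [HO [Oe HOU]]].
  assert (Oie : O (gi e)) by (rewrite ginv_one; exact Oe).
  destruct (inv_cont G e O HO Oie) as [V [HV [Ve HVO]]].
  exists V. auto.
Qed.

Lemma nbhd_sandwich a b x C :
  nbhd (a ** x ** b) C -> nbhd x (fun w => C (a ** w ** b)).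
Proof.
  intros [O [HO [Oaxb HOC]]].
  destruct (mul_cont G (a ** x) b O HO Oaxb) as [V1 [V2 [H1 [_ [V1ax [V2b HV]]]]]].
  destruct (mul_cont G a x V1 H1 V1ax) as [P1 [P2 [_ [HP2 [P1a [P2x HP]]]]]].
  exists P2. split; [exact HP2 | split; [exact P2x |]].
  intros w P2w. apply HOC, HV; auto.
Qed.

Lemma finite_set_union (F : list G) (S : G -> G -> Prop) :
  (forall g, In g F -> finite_set G (S g)) ->
  finite_set G (fun x => exists g, In g F /\ S g x).
Proof.
  induction F as [|g0 F IH]; intros HS.
  - exists []. intros x [g [[] _]].
  - destruct (HS g0 (or_introl eq_refl)) as [l0 Hl0].
    destruct IH as [l Hl]; [intros g Hg; apply HS; right; exact Hg |].
    exists (l0 ++ l).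
    intros x [g [[<- | Hg] Sx]]; apply in_or_app; [left | right]; eauto.
Qed.

Lemma infinite_set_cover_piece (F : list G) (S : G -> G -> Prop) (X : G -> Prop) :
  infinite_set G X -> (forall x, exists g, In g F /\ S g x) ->
  exists g, In g F /\ infinite_set G (fun x => X x /\ S g x).
Proof.
  intros HX HF. apply NNPP. intros Hno. apply HX.
  destruct (finite_set_union F (fun g x => X x /\ S g x)) as [l Hl].
  - intros g Hg. apply NNPP. intros Hinf. apply Hno. eauto.
  - exists l. intros x Xx. apply Hl.
    destruct (HF x) as [g [Hg Sx]]. eauto.
Qed.

Lemma infinite_set_NoDup_list (Y : G -> Prop) n : infinite_set G Y ->
  exists l, length l = n /\ NoDup l /\ forall x, In x l -> Y x.
Proof.
  intros HY. induction n as [|n [l [Hl [Hnd HlY]]]].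
  - exists []. repeat split; [constructor | intros x []].
  - assert (Hnew : exists x, Y x /\ ~ In x l).
    { apply NNPP. intros Hno. apply HY. exists l. intros x Yx.
      apply NNPP. intros Hx. apply Hno. eauto. }
    destruct Hnew as [x [Yx Hx]].
    exists (x :: l). simpl. repeat split.
    + congruence.
    + constructor; assumption.
    + intros y [<- | Hy]; auto.
Qed.

Lemma npow_succ_r g n : npow G g (S n) = npow G g n ** g.
Proof.
  induction n as [|n IH]; simpl in *.
  - rewrite gmul1r, gmul1l. reflexivity.
  - rewrite <- gmulA, <- IH. reflexivity.
Qed.

Lemma zpow_of_nat g n : zpow G g (Z.of_nat n) = npow G g n.
Proof. destruct n; simpl; [| rewrite SuccNat2Pos.id_succ]; reflexivity. Qed.

Lemma zpow_opp_of_nat g n : zpow G g (- Z.of_nat n) = gi (npow G g n).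
Proof.
  destruct n; simpl; [rewrite ginv_one | rewrite SuccNat2Pos.id_succ]; reflexivity.
Qed.

Lemma zpow_succ g z : zpow G g (z + 1) = zpow G g z ** g.
Proof.
  destruct (Z_of_nat_complete_inf (Z.abs z)) as [n Hn]; [lia |].
  destruct (Z.abs_spec z) as [[Hz Ha] | [Hz Ha]].
  - replace (z + 1)%Z with (Z.of_nat (S n)) by lia.
    replace z with (Z.of_nat n) by lia.
    rewrite !zpow_of_nat. apply npow_succ_r.
  - destruct n as [|q]; [lia |].
    replace (z + 1)%Z with (- Z.of_nat q)%Z by lia.
    replace z with (- Z.of_nat (S q))%Z by lia.
    rewrite !zpow_opp_of_nat. simpl.
    rewrite ginv_mul, <- gmulA, gmulVl, gmul1r. reflexivity.
Qed.

Lemma zpow_pred g z : zpow G g (z - 1) = zpow G g z ** gi g.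
Proof.
  rewrite <- (Z.sub_add 1 z) at 2.
  rewrite zpow_succ, <- gmulA, gmulVr, gmul1r. reflexivity.
Qed.

Lemma zpow_add g a b : zpow G g (a + b) = zpow G g a ** zpow G g b.
Proof.
  induction b as [|b IH|b IH] using Z.peano_ind.
  - rewrite Z.add_0_r. simpl. rewrite gmul1r. reflexivity.
  - rewrite <- Z.add_1_r, Z.add_assoc, !zpow_succ, IH, gmulA. reflexivity.
  - rewrite <- Z.sub_1_r, Z.add_sub_assoc, !zpow_pred, IH, gmulA. reflexivity.
Qed.

Hypothesis Htb : totally_bounded G.

Lemma nbhd_conj_small U : nbhd e U ->
  exists W, nbhd e W /\ forall x w, W w -> U (gi x ** w ** x).
Proof.
  intros HU.
  destruct (nbhd_mul_split U HU) as [A [B [HA [HB HAB]]]].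
  destruct (nbhd_mul_split B HB) as [C [D [HC [HD HCD]]]].
  destruct (Htb _ (nbhd_and _ _ _ HD (nbhd_inv A HA))) as [F HF].
  exists (fun w => forall g, In g F -> C (gi g ** w ** g)). split.
  - apply nbhd_forall_list. intros g _. apply nbhd_sandwich.
    rewrite gmul1r, gmulVl. exact HC.
  - intros x w HW. destruct (HF x) as [g [u [Hg [[Du Au] ->]]]].
    (* (gu)^-1 w (gu) = u^-1 (g^-1 w g) u, with u^-1 in A and u in D. *)
    replace (gi (g ** u) ** w ** (g ** u)) with (gi u ** ((gi g ** w ** g) ** u))
      by (rewrite ginv_mul, <- !gmulA; reflexivity).
    apply HAB; auto.
Qed.

Lemma npow_mul_small n U : nbhd e U ->
  exists W, nbhd e W /\ forall g z, W z ->
    exists u, U u /\ npow G (g ** z) n = u ** npow G g n.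
Proof.
  revert U. induction n as [|n IH]; intros U HU.
  - exists U. split; [exact HU |]. intros g z _.
    exists e. split; [exact (nbhd_mem _ _ HU) |]. simpl. rewrite gmul1l. reflexivity.
  - destruct (nbhd_conj_small U HU) as [W1 [HW1 Hconj]].
    destruct (nbhd_mul_split W1 HW1) as [A [B [HA [HB HAB]]]].
    destruct (IH B HB) as [W2 [HW2 Hpow]].
    exists (fun z => A z /\ W2 z). split; [apply nbhd_and; auto |].
    intros g z [Az W2z]. destruct (Hpow g z W2z) as [u [Bu Hu]].
    exists (gi (gi g) ** (z ** u) ** gi g). split; [apply Hconj; auto |].
    simpl. rewrite Hu, ginvK, <- !gmulA, gmulKl. reflexivity.
Qed.

Lemma zpow_mul_small n U : nbhd e U ->
  exists W, nbhd e W /\ forall g z, W z ->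
    exists u, U u /\ zpow G (g ** z) n = u ** zpow G g n.
Proof.
  intros HU. destruct n as [|p|p].
  - exists U. split; [exact HU |]. intros g z _.
    exists e. split; [exact (nbhd_mem _ _ HU) |]. simpl. rewrite gmul1l. reflexivity.
  - apply npow_mul_small; exact HU.
  - destruct (nbhd_conj_small U HU) as [W1 [HW1 Hconj]].
    destruct (npow_mul_small (Pos.to_nat p) _ (nbhd_inv W1 HW1)) as [W [HW Hpow]].
    exists W. split; [exact HW |]. intros g z Wz.
    destruct (Hpow g z Wz) as [u [Hu Hgz]].
    simpl. rewrite Hgz. set (q := npow G g (Pos.to_nat p)).
    exists (gi q ** gi u ** q). split; [apply Hconj; exact Hu |].
    rewrite ginv_mul, <- !gmulA, gmulVr, gmul1r. reflexivity.
Qed.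

Lemma prodpow_translate_small m U : nbhd e U ->
  exists W, nbhd e W /\ forall g ys, length ys = length m ->
    (forall y, In y ys -> exists w, W w /\ y = g ** w) ->
    exists u, U u /\ prodpow G m ys = u ** zpow G g (fold_right Z.add 0%Z m).
Proof.
  revert U. induction m as [|m0 m IH]; intros U HU.
  - exists U. split; [exact HU |]. intros g ys Hl _.
    destruct ys; [| discriminate].
    exists e. split; [exact (nbhd_mem _ _ HU) |]. simpl. rewrite gmul1l. reflexivity.
  - destruct (nbhd_mul_split U HU) as [A [B [HA [HB HAB]]]].
    destruct (nbhd_conj_small B HB) as [WB [HWB Hconj]].
    destruct (IH WB HWB) as [Wm [HWm Htail]].
    destruct (zpow_mul_small m0 A HA) as [W0 [HW0 Hhead]].
    exists (fun z => W0 z /\ Wm z). split; [apply nbhd_and; auto |].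
    intros g [|y0 ys] Hl Hys; [discriminate |].
    simpl in Hl. injection Hl as Hl.
    destruct (Hys y0 (or_introl eq_refl)) as [z0 [[W0z0 _] ->]].
    destruct (Hhead g z0 W0z0) as [u0 [Au0 E0]].
    destruct (Htail g ys Hl) as [u [Hu Eys]].
    { intros y Hy. destruct (Hys y (or_intror Hy)) as [w [[_ Wmw] ->]]. eauto. }
    set (p := zpow G g m0).
    exists (u0 ** (gi (gi p) ** u ** gi p)). split; [apply HAB; auto |].
    simpl. rewrite E0, Eys, zpow_add. fold p.
    rewrite ginvK, <- !gmulA, gmulKl. reflexivity.
Qed.

End TopGroupFacts.

Theorem proposition5p1 (G : TopGroup)
  (Hinf : infinite_set G (fun _ : G => True))
  (Htb : totally_bounded G)
  (m : list Z) (Hsum : fold_right Z.add 0%Z m = 0%Z)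
  (U : G -> Prop) (HU : neighbourhood G (gone G) U) :
  ramsey_product G m U.
Proof.
  intros X HX.
  destruct (prodpow_translate_small G Htb m U HU) as [W [HW Hprod]].
  destruct (Htb W HW) as [F HF].
  destruct (infinite_set_cover_piece G F
              (fun g x => exists w, W w /\ x = gmul G g w) X HX)
    as [g [_ Hpiece]].
  { intros x. destruct (HF x) as [g [w [Hg [Ww ->]]]]. eauto. }
  destruct (infinite_set_NoDup_list G _ (length m) Hpiece) as [xs [Hl [Hnd Hxs]]].
  exists xs. repeat split; [exact Hl | exact Hnd | intros x Hx; apply Hxs, Hx |].
  intros ys Hperm.
  destruct (Hprod g ys) as [u [Uu ->]].
  - rewrite <- (Permutation_length Hperm). exact Hl.
  - intros y Hy. apply Hxs, (Permutation_in _ (Permutation_sym Hperm)), Hy.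
  - rewrite Hsum. simpl. rewrite gmul1r. exact Uu.
Qed.
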